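(* There exist an environment $E$ and a total preorder $\succeq$ on $\Pi^E$ such that $\succeq\in\mathrm{Ord}_{\mathrm{LAR}}(E)$ but $\succeq\notin\mathrm{Ord}_{\mathrm{RRL}}(E)$.
   Context: An environment is a tuple $E=(\mathcal S,\mathcal A,\mathcal T,\mathcal I)$ where $\mathcal S,\mathcal A$ are finite nonempty sets, $\mathcal T:\mathcal S\times\mathcal A\to\Delta(\mathcal S)$ and $\mathcal I\in\Delta(\mathcal S)$. A policy is a map $\pi:\mathcal S\to\Delta(\mathcal A)$ (stationary, possibly stochastic); $\Pi^E$ denotes the set of all policies. A trajectory $\xi=(s_0,a_0,s_1,a_1,\dots)$ is generated under $\pi$ by $s_0\sim\mathcal I$, $a_t\sim\pi(s_t)$, $s_{t+1}\sim\mathcal T(s_t,a_t)$; $\mathbb E^\pi_\xi$ denotes expectation under this distribution. An objective-specification formalism $X$ assigns to each environment $E$ a set of objective specifications, each inducing a total preorder $\succeq$ on $\Pi^E$; $\mathrm{Ord}_X(E)$ is the set of total preorders so induced. A specification defining a scalar $J:\Pi^E\to\mathbb R$ induces $\pi_1\succeq\pi_2\iff J(\pi_1)\ge J(\pi_2)$. LAR: specification $(\mathcal R)$, $\mathcal R:\mathcal S\times\mathcal A\times\mathcal S\to\mathbb R$, $J(\pi)=\lim_{N\to\infty}\frac1N\mathbb E^\pi_\xi[\sum_{t=0}^{N-1}\mathcal R(s_t,a_t,s_{t+1})]$. RRL: specification $(\mathcal R,\alpha,F,\gamma)$ with $\mathcal R:\mathcal S\times\mathcal A\times\mathcal S\to\mathbb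 R$, $\alpha\in\mathbb R$, $F:\Delta(\mathcal A)\to\mathbb R$, $\gamma\in[0,1)$; $J(\pi)=\mathbb E^\pi_\xi[\sum_{t=0}^\infty\gamma^t(\mathcal R(s_t,a_t,s_{t+1})-\alpha F(\pi(s_t)))]$. *)

From HB Require Import structures.
From mathcomp Require Import all_boot all_order all_algebra.
From mathcomp Require Import all_classical all_reals all_analysis.
From mathcomp Require Import Rstruct Rstruct_topology.
Set Implicit Arguments. Unset Strict Implicit. Unset Printing Implicit Defensive.
Import Order.TTheory GRing.Theory Num.Theory numFieldNormedType.Exports.
Local Open Scope classical_set_scope.
Local Open Scope ring_scope.

Section RL.
Variable R : realType.

Definition is_dist (T : finType) (p : T -> R) : Prop :=
  (forall x, 0 <= p x) /\ \sum_(x : T) p x = 1.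

Definition distr (T : finType) := {p : T -> R | is_dist p}.

Record env := Env {
  st : finType;
  act : finType;
  st_nonempty : (0 < #|st|)%N;
  act_nonempty : (0 < #|act|)%N;
  trans : st -> act -> st -> R;          (* trans s a s' = T(s,a)(s') *)
  trans_dist : forall s a, is_dist (trans s a);
  init : st -> R;
  init_dist : is_dist init }.

Definition policy (E : env) := {p : st E -> act E -> R | forall s, is_dist (p s)}.

Definition pol_dist (E : env) (pi : policy E) (s : st E) : distr (act E) :=
  exist _ (proj1_sig pi s) (proj2_sig pi s).

Fixpoint state_marg (E : env) (pi : policy E) (t : nat) : st E -> R :=
  match t with
  | O => @init E
  | t'.+1 => fun s' => \sum_(s : st E) \sum_(a : act E)
              state_marg pi t' s * proj1_sig pi s a * trans s a s'
  end.

Definition exp_reward (E : env) (Rw : st E -> act E -> st E -> R)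
  (pi : policy E) (t : nat) : R :=
  \sum_(s : st E) \sum_(a : act E) \sum_(s' : st E)
    state_marg pi t s * proj1_sig pi s a * trans s a s' * Rw s a s'.

Definition exp_reg (E : env) (F : distr (act E) -> R) (pi : policy E) (t : nat) : R :=
  \sum_(s : st E) state_marg pi t s * F (pol_dist pi s).

Definition J_LAR (E : env) (Rw : st E -> act E -> st E -> R) (pi : policy E) : R :=
  limn ((fun N : nat => N%:R^-1 * \sum_(t < N) exp_reward Rw pi t) : R^nat).

Definition J_RRL (E : env) (Rw : st E -> act E -> st E -> R) (alpha : R)
  (F : distr (act E) -> R) (gamma : R) (pi : policy E) : R :=
  limn ((fun N : nat => \sum_(t < N)
          gamma ^+ t * (exp_reward Rw pi t - alpha * exp_reg F pi t)) : R^nat).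

Definition total_preorder (T : Type) (r : T -> T -> Prop) : Prop :=
  (forall x, r x x) /\ (forall x y z, r x y -> r y z -> r x z) /\
  (forall x y, r x y \/ r y x).

Definition induced_by (T : Type) (J : T -> R) (ord : T -> T -> Prop) : Prop :=
  forall p q, ord p q <-> J p >= J q.

Definition in_Ord_LAR (E : env) (ord : policy E -> policy E -> Prop) : Prop :=
  exists Rw : st E -> act E -> st E -> R, induced_by (J_LAR Rw) ord.

Definition in_Ord_RRL (E : env) (ord : policy E -> policy E -> Prop) : Prop :=
  exists (Rw : st E -> act E -> st E -> R) (alpha : R) (F : distr (act E) -> R) (gamma : R),
    0 <= gamma < 1 /\ induced_by (J_RRL Rw alpha F gamma) ord.

End RL.

From HB Require Import structures.
From mathcomp Require Import all_boot all_order all_algebra.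
From mathcomp Require Import all_classical all_reals all_analysis.
From mathcomp Require Import Rstruct Rstruct_topology.
From mathcomp Require Import ring lra.
Set Implicit Arguments. Unset Strict Implicit. Unset Printing Implicit Defensive.
Import Order.TTheory GRing.Theory Num.Theory numFieldNormedType.Exports.
Local Open Scope classical_set_scope.
Local Open Scope ring_scope.

(* The witness is the deterministic environment in which the start state s0
   leads to the absorbing state s1 either directly (action true) or through
   the detour state s2 (action false).  Average reward "1 for playing true in
   s1" ranks policies by their action in s1 alone.  An RRL objective inducing
   this order has to be indifferent to the action in s0 whatever is played in
   s1.  But with discount g, the regularized per-step value w of the s1 action
   is worth g w / (1 - g) when s1 is reached at time 1 and g^2 w / (1 - g)
   when it is reached at time 2; the two indifferences therefore force
   g w_true = g w_false, so both actions in s1 are valued equally, against the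
   strict LAR preference. *)

Section Limits.
Variable R : realType.

Lemma cvg_eventually_const (u : R^nat) (k : nat) :
  (forall t, u (t + k)%N = u k) -> u @ \oo --> u k.
Proof.
move=> u_const; rewrite -(cvg_shiftn k).
under eq_fun => t do rewrite u_const.
exact: cvg_cst.
Qed.

Lemma limn_cesaro (u : R^nat) (l : R) : u @ \oo --> l ->
  limn ((fun N : nat => N%:R^-1 * \sum_(t < N) u t) : R^nat) = l.
Proof.
move=> /cesaro u_mean; apply: cvg_lim; first exact: Rhausdorff.
rewrite -(cvg_shiftn 1); apply: cvg_trans u_mean; apply: near_eq_cvg.
by near=> n; rewrite /arithmetic_mean /= addn1 seriesEnat /= big_mkord.
Unshelve. all: by end_near. Qed.

Lemma limn_discounted_eventually_const (g : R) (u : R^nat) (k : nat) :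
  0 <= g < 1 -> (forall t, u (t + k)%N = u k) ->
  limn ((fun N : nat => \sum_(t < N) g ^+ t * u t) : R^nat) =
    \sum_(t < k) g ^+ t * u t + g ^+ k * u k / (1 - g).
Proof.
move=> /andP[g_ge0 g_lt1] u_const; apply: cvg_lim; first exact: Rhausdorff.
have geo : series (geometric 1 g) @ \oo --> (1 * (1 - g)^-1 : R).
  by apply: cvg_geometric_series; rewrite ger0_norm.
rewrite mul1r in geo; rewrite -(cvg_shiftn k).
suff -> : [sequence \sum_(t < n + k) g ^+ t * u t]_n =
  (fun n => \sum_(t < k) g ^+ t * u t + g ^+ k * u k * series (geometric 1 g) n).
  by apply: cvgD; [exact: cvg_cst | exact: cvgMl_tmp].
apply: funext => n /=; rewrite addnC big_split_ord /=; congr (_ + _).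
rewrite seriesEnat /= big_mkord mulr_sumr; apply: eq_bigr => t _ /=.
by rewrite addnC u_const exprD mul1r; ring.
Qed.

End Limits.

Lemma induced_total_preorder (T : Type) (R : realType) (J : T -> R) :
  total_preorder (fun p q => J q <= J p).
Proof.
split=> [p|]; first exact: lexx.
split=> [p q r pq qr|p q]; first exact: le_trans qr pq.
by case: (leP (J p) (J q)) => [|/ltW]; [right|left].
Qed.

Lemma discounted_ties_force_tie (R : realFieldType) (g a b d x y : R) :
  0 <= g < 1 ->
  a + g * x + g ^+ 2 * x / (1 - g) = b + g * d + g ^+ 2 * x / (1 - g) ->
  a + g * y + g ^+ 2 * y / (1 - g) = b + g * d + g ^+ 2 * y / (1 - g) ->
  a + g * x + g ^+ 2 * x / (1 - g) = a + g * y + g ^+ 2 * y / (1 - g).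
Proof.
move=> /andP[_ g_lt1] tie_x tie_y.
have gx_gy : g * x = g * y by lra.
have g1_neq0 : 1 - g != 0 by rewrite subr_eq0 gt_eqF.
have geo z : g * z + g ^+ 2 * z / (1 - g) = g * z / (1 - g) by field.
by rewrite -!addrA !geo gx_gy.
Qed.

Section DeterministicEnvironment.
Variables (R : realType) (S A : finType).
Hypotheses (S_nonempty : (0 < #|S|)%N) (A_nonempty : (0 < #|A|)%N).
Variables (next : S -> A -> S) (start : S).

Lemma sum_indicator (T : finType) (x : T) (f : T -> R) :
  \sum_(y : T) (y == x)%:R * f y = f x.
Proof.
rewrite (bigD1 x) //= eqxx mul1r big1 ?addr0 // => y /negbTE ->.
by rewrite mul0r.
Qed.

Lemma dirac_is_dist (T : finType) (x : T) : is_dist (fun y : T => (y == x)%:R : R).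
Proof.
split=> [y|]; first by rewrite ler0n.
by rewrite -[RHS](sum_indicator x (fun _ => 1)); apply: eq_bigr => y _; rewrite mulr1.
Qed.

Definition det_env : env R :=
  Env S_nonempty A_nonempty (fun s a => dirac_is_dist (next s a)) (dirac_is_dist start).

Definition det_policy (c : S -> A) : policy det_env :=
  exist (fun p : S -> A -> R => forall s, is_dist (p s))
    (fun s a => (a == c s)%:R) (fun s => dirac_is_dist (c s)).

Fixpoint det_traj (c : S -> A) (t : nat) : S :=
  if t is t'.+1 then next (det_traj c t') (c (det_traj c t')) else start.

Lemma state_marg_det_policy c t s :
  state_marg (det_policy c) t s = (s == det_traj c t)%:R.
Proof.
elim: t s => [|t IH] s //=.
under eq_bigr => x _ do under eq_bigr => a _ do rewrite IH -!mulrA.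
under eq_bigr => x _ do rewrite -mulr_sumr.
by rewrite sum_indicator sum_indicator.
Qed.

Lemma exp_reward_det_policy (Rw : S -> A -> S -> R) c t :
  @exp_reward R det_env Rw (det_policy c) t =
    Rw (det_traj c t) (c (det_traj c t)) (next (det_traj c t) (c (det_traj c t))).
Proof.
rewrite /exp_reward.
under eq_bigr => x _ do under eq_bigr => a _ do under eq_bigr => y _ do
  rewrite state_marg_det_policy /= -!mulrA.
under eq_bigr => x _ do under eq_bigr => a _ do rewrite -mulr_sumr.
under eq_bigr => x _ do rewrite -mulr_sumr.
rewrite sum_indicator; under eq_bigr => a _ do rewrite -mulr_sumr.
by rewrite !sum_indicator.
Qed.

Lemma exp_reg_det_policy (F : distr R A -> R) c t :
  @exp_reg R det_env F (det_policy c) t = F (pol_dist (det_policy c) (det_traj c t)).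
Proof.
rewrite /exp_reg; under eq_bigr => x _ do rewrite state_marg_det_policy.
exact: sum_indicator.
Qed.

Definition det_reg_reward (Rw : S -> A -> S -> R) (alpha : R) (F : distr R A -> R)
    (c : S -> A) (s : S) : R :=
  Rw s (c s) (next s (c s)) - alpha * F (pol_dist (det_policy c) s).

Lemma det_reg_reward_local Rw alpha F (c c' : S -> A) s :
  c s = c' s -> det_reg_reward Rw alpha F c s = det_reg_reward Rw alpha F c' s.
Proof.
move=> cs_eq; rewrite /det_reg_reward cs_eq; congr (_ - _ * F _).
rewrite /pol_dist; apply: eq_exist => /=.
by apply: funext => a; rewrite cs_eq.
Qed.

Section EventuallyAbsorbed.
Variables (c : S -> A) (k : nat).
Hypothesis traj_absorbed : forall t, det_traj c (t + k) = det_traj c k.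

Lemma J_LAR_det_policy (Rw : S -> A -> S -> R) :
  J_LAR (E := det_env) Rw (det_policy c) =
    Rw (det_traj c k) (c (det_traj c k)) (next (det_traj c k) (c (det_traj c k))).
Proof.
rewrite /J_LAR (limn_cesaro (l := exp_reward (E := det_env) Rw (det_policy c) k)).
  by rewrite exp_reward_det_policy.
by apply: cvg_eventually_const => t; rewrite !exp_reward_det_policy traj_absorbed.
Qed.

Lemma J_RRL_det_policy Rw alpha F (g : R) : 0 <= g < 1 ->
  J_RRL (E := det_env) Rw alpha F g (det_policy c) =
    \sum_(t < k) g ^+ t * det_reg_reward Rw alpha F c (det_traj c t)
    + g ^+ k * det_reg_reward Rw alpha F c (det_traj c k) / (1 - g).
Proof.
move=> g01; rewrite /J_RRL.
under eq_fun => N do under eq_bigr => t _ do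
  rewrite exp_reward_det_policy exp_reg_det_policy.
apply: (limn_discounted_eventually_const
  (u := fun t => det_reg_reward Rw alpha F c (det_traj c t))) g01 _ => t /=.
by rewrite traj_absorbed.
Qed.

End EventuallyAbsorbed.

End DeterministicEnvironment.

Section Counterexample.
Variable R : realType.

Definition s0 : 'I_3 := ord0.
Definition s1 : 'I_3 := Ordinal (isT : (1 < 3)%N).
Definition s2 : 'I_3 := Ordinal (isT : (2 < 3)%N).

Definition next (s : 'I_3) (a : bool) : 'I_3 :=
  if s == s0 then (if a then s1 else s2) else s1.

Lemma card_I3_gt0 : (0 < #|'I_3|)%N. Proof. by rewrite card_ord. Qed.
Lemma card_bool_gt0 : (0 < #|{: bool}|)%N. Proof. by rewrite card_bool. Qed.

Definition E3 : env R := det_env R card_I3_gt0 card_bool_gt0 next s0.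

Definition decision (b v : bool) (s : 'I_3) : bool := if s == s1 then v else b.

Definition decision_policy (b v : bool) : policy E3 :=
  det_policy R card_I3_gt0 card_bool_gt0 next s0 (decision b v).

Lemma det_traj_absorbed (c : 'I_3 -> bool) t :
  det_traj next s0 c (t + 2) = det_traj next s0 c 2.
Proof.
have traj2 : det_traj next s0 c 2 = s1 by rewrite /= /next; case: (c s0).
by elim: t => [|t IH] //; rewrite addSn /= IH traj2.
Qed.

Definition lar_reward (s : 'I_3) (a : bool) (_ : 'I_3) : R := ((s == s1) && a)%:R.

Lemma J_LAR_decision (b v : bool) : J_LAR (E := E3) lar_reward (decision_policy b v) = v%:R.
Proof.
rewrite (J_LAR_det_policy _ _ (det_traj_absorbed _)).
by rewrite /= /next; case: b.
Qed.

Section Regularized.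
Variables (Rw : 'I_3 -> bool -> 'I_3 -> R) (alpha : R) (F : distr R bool -> R) (g : R).
Hypothesis g01 : 0 <= g < 1.

Let w (b v : bool) (s : 'I_3) : R :=
  det_reg_reward card_I3_gt0 card_bool_gt0 next s0 Rw alpha F (decision b v) s.

Lemma w_local b v b' v' s : decision b v s = decision b' v' s -> w b v s = w b' v' s.
Proof. exact: det_reg_reward_local. Qed.

Lemma J_RRL_decision_true v :
  J_RRL (E := E3) Rw alpha F g (decision_policy true v) =
    w true false s0 + g * w true v s1 + g ^+ 2 * w true v s1 / (1 - g).
Proof.
rewrite (J_RRL_det_policy (det_traj_absorbed _)) //.
rewrite !big_ord_recr big_ord0 /= add0r expr0 mul1r expr1 /next /=.
by rewrite (@w_local true false true v s0).
Qed.

Lemma J_RRL_decision_false v :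
  J_RRL (E := E3) Rw alpha F g (decision_policy false v) =
    w false false s0 + g * w false false s2 + g ^+ 2 * w true v s1 / (1 - g).
Proof.
rewrite (J_RRL_det_policy (det_traj_absorbed _)) //.
rewrite !big_ord_recr big_ord0 /= add0r expr0 mul1r expr1 /next /=.
by rewrite (@w_local false false false v s0) ?(@w_local false false false v s2)
  ?(@w_local true v false v s1).
Qed.

End Regularized.

Definition lar_order (p q : policy E3) : Prop :=
  J_LAR (E := E3) lar_reward q <= J_LAR (E := E3) lar_reward p.

Lemma lar_order_not_RRL : ~ in_Ord_RRL lar_order.
Proof.
case=> Rw [alpha [F [g [g01 induced]]]].
set J := J_RRL (E := E3) Rw alpha F g.
have tie v : J (decision_policy true v) = J (decision_policy false v).
  by apply/eqP; rewrite eq_le; apply/andP; split; apply/induced;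
    rewrite /lar_order !J_LAR_decision.
have strict : J (decision_policy true false) < J (decision_policy true true).
  by rewrite ltNge; apply/negP => /induced; rewrite /lar_order !J_LAR_decision ler10.
have [tie_f tie_t] := (tie false, tie true).
rewrite /J !J_RRL_decision_true // !J_RRL_decision_false // in tie_f tie_t strict.
by move: strict; rewrite (discounted_ties_force_tie g01 tie_f tie_t) ltxx.
Qed.

End Counterexample.

Theorem mainTheorem19 :
  exists (E : env Rdefinitions.R) (ord : policy E -> policy E -> Prop),
    total_preorder ord /\ in_Ord_LAR ord /\ ~ in_Ord_RRL ord.
Proof.
exists (E3 Rdefinitions.R), (@lar_order _); split; first exact: induced_total_preorder.
by split; [exists (@lar_reward _) | exact: lar_order_not_RRL].
Qed.
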